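(* Let $X=\mathrm{Bl}_{x_0}\mathbb{P}^2$ with hyperplane class $H$ and exceptional divisor $E$, $b>1$, $\beta=b[H]-[E]$, $p\in\mathbb{R}$, and for $s<pb$ let $\tilde\alpha_s=p[H]-s[E]$ and $\tilde c_s=\frac{p^2-s^2-b^2+1}{2(pb-s)}=\frac{\tilde\alpha_s^2-\beta^2}{2\tilde\alpha_s\cdot\beta}$. Then $$\tilde c_s<\min\Big(\frac pb,\ \frac{p-s}{b-1},\ bp\Big).$$ In particular: (1) $\tilde\alpha_s-\tilde c_s\beta$ is a big class, and it is Kähler (resp. nef) if and only if $s>\tilde c_s$ (resp. $s\ge\tilde c_s$); (2) $(X,\tilde\alpha_s,\beta)$ is dHYM-stable (resp. semi-stable) if and only if $s>\tilde c_s$ (resp. $s\ge\tilde c_s$).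
   Context: For a class $\alpha$ with $\alpha\cdot\beta\neq0$ the dHYM angle satisfies $\cot\vartheta=\frac{\alpha^2-\beta^2}{2\alpha\cdot\beta}$. $(X,\alpha,\beta)$ is dHYM-stable if for every Kähler class $\gamma$ and $k=1,2$, $\mathrm{Re}(\alpha+\sqrt{-1}\beta)^k\cdot\gamma^{2-k}\ge\cot\vartheta\,\mathrm{Im}(\alpha+\sqrt{-1}\beta)^k\cdot\gamma^{2-k}$, and for every curve $Z$, $\mathrm{Re}(\alpha+\sqrt{-1}\beta)\cdot Z>\cot\vartheta\,\mathrm{Im}(\alpha+\sqrt{-1}\beta)\cdot Z$; dHYM-semi-stable is the same with all inequalities non-strict. *)

From Stdlib Require Import Reals Lra List.
Open Scope R_scope.

(* Model of H^{1,1}(X,R) for X = Bl_{x0} P^2: the class  ch*[H] + ce*[E]. *)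
Record cls := mkcls { ch : R ; ce : R }.

Definition clsH : cls := mkcls 1 0.
Definition clsE : cls := mkcls 0 1.
Definition cadd (u v : cls) : cls := mkcls (ch u + ch v) (ce u + ce v).
Definition cscale (t : R) (u : cls) : cls := mkcls (t * ch u) (t * ce u).
Definition csub (u v : cls) : cls := cadd u (cscale (-1) v).

(* Intersection form: H^2 = 1, E^2 = -1, H.E = 0. *)
Definition dot (u v : cls) : R := ch u * ch v - ce u * ce v.

(* Classes of irreducible curves on X: the exceptional curve E, and the strict
   transforms d[H] - m[E] of irreducible plane curves of degree d >= 1 having
   multiplicity m at x0 (0 <= m <= d, with m = d only for lines, d = 1). *)
Definition curve_class (Z : cls) : Prop :=
  Z = clsE \/
  exists d m : nat, (1 <= d)%nat /\ (m <= d)%nat /\ ((m < d)%nat \/ d = 1%nat) /\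
    Z = mkcls (INR d) (- INR m).

Definition nef (g : cls) : Prop := forall Z, curve_class Z -> 0 <= dot g Z.

(* Kähler (= ample, as h^{2,0}(X)=0): Nakai–Moishezon criterion. *)
Definition kahler (g : cls) : Prop :=
  0 < dot g g /\ forall Z, curve_class Z -> 0 < dot g Z.

Definition effective (D : cls) : Prop :=
  exists l : list (R * cls),
    Forall (fun q => 0 <= fst q /\ curve_class (snd q)) l /\
    D = fold_right (fun q acc => cadd (cscale (fst q) (snd q)) acc) (mkcls 0 0) l.

Definition big (g : cls) : Prop :=
  exists A D, kahler A /\ effective D /\ g = cadd A D.

Definition cot_dHYM (a b : cls) : R := (dot a a - dot b b) / (2 * dot a b).

(* Re / Im of (alpha + i beta)^k . gamma^(2-k), k = 1, 2. *)
Definition Re1 (a b g : cls) : R := dot a g.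
Definition Im1 (a b g : cls) : R := dot b g.
Definition Re2 (a b : cls) : R := dot a a - dot b b.
Definition Im2 (a b : cls) : R := 2 * dot a b.

Definition dHYM_stable (a b : cls) : Prop :=
  (forall g, kahler g ->
     Re1 a b g >= cot_dHYM a b * Im1 a b g /\
     Re2 a b >= cot_dHYM a b * Im2 a b) /\
  (forall Z, curve_class Z -> dot a Z > cot_dHYM a b * dot b Z).

Definition dHYM_semistable (a b : cls) : Prop :=
  (forall g, kahler g ->
     Re1 a b g >= cot_dHYM a b * Im1 a b g /\
     Re2 a b >= cot_dHYM a b * Im2 a b) /\
  (forall Z, curve_class Z -> dot a Z >= cot_dHYM a b * dot b Z).

From Stdlib Require Import Reals Lra Psatz List.
Open Scope R_scope.

(* The curve classes are E and d H - m E with 0 <= m <= d, so x H - y E is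
   nef (resp. Kähler) iff 0 <= y <= x (resp. 0 < y < x): it suffices to test
   E and the line H - E through x0.  The curve conditions of dHYM
   (semi-)stability say that gamma := alpha - (cot theta) beta is Kähler
   (resp. nef); the conditions against Kähler classes then come for free,
   since nef classes pair nonnegatively with Kähler classes and the k = 2
   inequality is an equality.  Here cot theta = c and
   gamma = (p - c b) H - (s - c) E; clearing the positive denominator
   2 (p b - s) turns the three bounds on c into sums of squares, giving
   p - c b > s - c and p - c b > 0, so all is decided by the sign of s - c. *)

Lemma curve_exceptional : curve_class clsE.
Proof. now left. Qed.

Lemma curve_line : curve_class (mkcls 1 (-1)).
Proof. right; exists 1%nat, 1%nat; simpl; repeat split; auto. Qed.

Lemma dot_curve_cases (x y : R) (Z : cls) : curve_class Z ->
  dot (mkcls x (- y)) Z = y \/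
  exists d m : nat, 1 <= INR d /\ INR m <= INR d /\
    dot (mkcls x (- y)) Z = INR d * (x - y) + (INR d - INR m) * y.
Proof.
  intros [-> | [d [m [hd [hm [_ ->]]]]]]; unfold dot; simpl.
  - left; ring.
  - right; exists d, m; split; [|split].
    + now apply le_INR in hd.
    + now apply le_INR.
    + ring.
Qed.

Lemma dot_curve_nonneg (x y : R) (Z : cls) :
  0 <= y <= x -> curve_class Z -> 0 <= dot (mkcls x (- y)) Z.
Proof.
  intros hxy hZ.
  destruct (dot_curve_cases x y Z hZ) as [-> | [d [m [hd [hm ->]]]]]; nra.
Qed.

Lemma dot_curve_pos (x y : R) (Z : cls) :
  0 < y < x -> curve_class Z -> 0 < dot (mkcls x (- y)) Z.
Proof.
  intros hxy hZ.
  destruct (dot_curve_cases x y Z hZ) as [-> | [d [m [hd [hm ->]]]]]; nra.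
Qed.

Lemma nef_mkcls_iff (x y : R) : nef (mkcls x (- y)) <-> 0 <= y <= x.
Proof.
  split.
  - intros h.
    pose proof (h _ curve_exceptional) as hE; pose proof (h _ curve_line) as hL.
    unfold dot, clsE in hE, hL; simpl in hE, hL; lra.
  - intros hxy Z; exact (dot_curve_nonneg x y Z hxy).
Qed.

Lemma kahler_iff_pos_curves (g : cls) :
  kahler g <-> forall Z, curve_class Z -> 0 < dot g Z.
Proof.
  split; [now intros [_ h]|].
  intros h; split; [|exact h].
  pose proof (h _ curve_exceptional) as hE; pose proof (h _ curve_line) as hL.
  destruct g as [x e]; unfold dot, clsE in *; simpl in *; nra.
Qed.

Lemma kahler_mkcls_iff (x y : R) : kahler (mkcls x (- y)) <-> 0 < y < x.
Proof.
  rewrite kahler_iff_pos_curves; split.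
  - intros h.
    pose proof (h _ curve_exceptional) as hE; pose proof (h _ curve_line) as hL.
    unfold dot, clsE in hE, hL; simpl in hE, hL; lra.
  - intros hxy Z; exact (dot_curve_pos x y Z hxy).
Qed.

Lemma nef_of_kahler (g : cls) : kahler g -> nef g.
Proof. intros [_ h] Z hZ; exact (Rlt_le _ _ (h Z hZ)). Qed.

(* The pairing of x H + e E with u H + v E is (x + e) u - e (u + v), and
   every factor is a pairing with E or H - E. *)
Lemma dot_nef_kahler_nonneg (a g : cls) : nef a -> kahler g -> 0 <= dot a g.
Proof.
  intros ha [_ hg].
  pose proof (ha _ curve_exceptional) as aE; pose proof (ha _ curve_line) as aL.
  pose proof (hg _ curve_exceptional) as gE; pose proof (hg _ curve_line) as gL.
  destruct a as [x e], g as [u v]; unfold dot, clsE in *; simpl in *.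
  replace (x * u - e * v) with ((x + e) * u + (- e) * (u + v)) by ring.
  apply Rplus_le_le_0_compat; apply Rmult_le_pos; lra.
Qed.

Lemma effective_scale_curve (t : R) (Z : cls) :
  0 <= t -> curve_class Z -> effective (cscale t Z).
Proof.
  intros ht hZ; exists ((t, Z) :: nil); split.
  - constructor; [split; assumption | constructor].
  - destruct Z; unfold cadd, cscale; simpl; f_equal; ring.
Qed.

(* Subtract from x H - y E a nonnegative multiple of E so as to land in the
   Kähler cone 0 < y' < x. *)
Lemma big_mkcls (x y : R) : 0 < x -> y < x -> big (mkcls x (- y)).
Proof.
  intros hx hxy; set (y' := Rmax y (x / 2)).
  assert (hy' : y <= y' /\ x / 2 <= y') by (split; [apply Rmax_l | apply Rmax_r]).
  assert (hy'x : y' < x) by (unfold y'; apply Rmax_lub_lt; lra).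
  exists (mkcls x (- y')), (cscale (y' - y) clsE); split; [|split].
  - apply kahler_mkcls_iff; lra.
  - apply effective_scale_curve; [lra | exact curve_exceptional].
  - unfold cadd, cscale, clsE; simpl; f_equal; ring.
Qed.

Lemma dot_csub_cscale (a v g : cls) (t : R) :
  dot (csub a (cscale t v)) g = dot a g - t * dot v g.
Proof. destruct a, v, g; unfold dot, csub, cadd, cscale; simpl; ring. Qed.

Lemma cot_dHYM_mul_Im2 (a b : cls) :
  dot a b <> 0 -> cot_dHYM a b * Im2 a b = Re2 a b.
Proof. intros hab; unfold cot_dHYM, Re2, Im2; field; exact hab. Qed.

Lemma dHYM_kahler_test_of_nef (a b g : cls) :
  dot a b <> 0 -> nef (csub a (cscale (cot_dHYM a b) b)) -> kahler g ->
  Re1 a b g >= cot_dHYM a b * Im1 a b g /\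
  Re2 a b >= cot_dHYM a b * Im2 a b.
Proof.
  intros hab hnef hg; unfold Re1, Im1; split.
  - pose proof (dot_nef_kahler_nonneg _ _ hnef hg) as h.
    rewrite dot_csub_cscale in h; lra.
  - rewrite cot_dHYM_mul_Im2 by exact hab; lra.
Qed.

Lemma dHYM_stable_iff_kahler (a b : cls) : dot a b <> 0 ->
  dHYM_stable a b <-> kahler (csub a (cscale (cot_dHYM a b) b)).
Proof.
  intros hab; rewrite kahler_iff_pos_curves; split.
  - intros [_ h] Z hZ; rewrite dot_csub_cscale; specialize (h Z hZ); lra.
  - intros h; split.
    + intros g hg; apply dHYM_kahler_test_of_nef; [exact hab | | exact hg].
      apply nef_of_kahler, kahler_iff_pos_curves; exact h.
    + intros Z hZ; specialize (h Z hZ); rewrite dot_csub_cscale in h; lra.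
Qed.

Lemma dHYM_semistable_iff_nef (a b : cls) : dot a b <> 0 ->
  dHYM_semistable a b <-> nef (csub a (cscale (cot_dHYM a b) b)).
Proof.
  intros hab; split.
  - intros [_ h] Z hZ; rewrite dot_csub_cscale; specialize (h Z hZ); lra.
  - intros h; split.
    + intros g hg; apply dHYM_kahler_test_of_nef; assumption.
    + intros Z hZ; specialize (h Z hZ); rewrite dot_csub_cscale in h; lra.
Qed.

Section SlopeBounds.

Variables b p s c : R.
Hypothesis hb : 1 < b.
Hypothesis hs : s < p * b.
Hypothesis hc : c * (2 * (p * b - s)) = p ^ 2 - s ^ 2 - b ^ 2 + 1.

Lemma slope_mul_b_lt : c * b < p.
Proof.
  apply (Rmult_lt_reg_l (2 * (p * b - s))); [lra|].
  replace (2 * (p * b - s) * (c * b)) with (b * (c * (2 * (p * b - s)))) by ring.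
  rewrite hc.
  assert (hsq : 0 < b * p ^ 2 - 2 * p * s + b * s ^ 2 + b ^ 3 - b).
  { apply (Rmult_lt_reg_l b); [lra|]; rewrite Rmult_0_r.
    replace (b * (b * p ^ 2 - 2 * p * s + b * s ^ 2 + b ^ 3 - b))
      with ((b * p - s) ^ 2 + (b ^ 2 - 1) * s ^ 2 + b ^ 2 * (b ^ 2 - 1)) by ring.
    assert (0 < b ^ 2 - 1) by nra.
    pose proof (pow2_ge_0 (b * p - s)); pose proof (pow2_ge_0 s); nra. }
  lra.
Qed.

Lemma slope_mul_pred_b_lt : c * (b - 1) < p - s.
Proof.
  apply (Rmult_lt_reg_l (2 * (p * b - s))); [lra|].
  replace (2 * (p * b - s) * (c * (b - 1)))
    with ((b - 1) * (c * (2 * (p * b - s)))) by ring.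
  rewrite hc.
  assert (2 * (p * b - s) * (p - s) - (b - 1) * (p ^ 2 - s ^ 2 - b ^ 2 + 1)
          = (b + 1) * (p - s) ^ 2 + (b - 1) * (b ^ 2 - 1)) by ring.
  assert (0 <= (b + 1) * (p - s) ^ 2) by (apply Rmult_le_pos; [lra | apply pow2_ge_0]).
  assert (0 < (b - 1) * (b ^ 2 - 1)) by (apply Rmult_lt_0_compat; nra).
  lra.
Qed.

Lemma slope_lt_b_mul_p : c < b * p.
Proof.
  apply (Rmult_lt_reg_l (2 * (p * b - s))); [lra|].
  rewrite (Rmult_comm _ c), hc.
  assert (2 * (p * b - s) * (b * p) - (p ^ 2 - s ^ 2 - b ^ 2 + 1)
          = (b ^ 2 - 1) * p ^ 2 + (b * p - s) ^ 2 + (b ^ 2 - 1)) by ring.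
  assert (0 < b ^ 2 - 1) by nra.
  assert (0 <= (b ^ 2 - 1) * p ^ 2) by (apply Rmult_le_pos; [lra | apply pow2_ge_0]).
  pose proof (pow2_ge_0 (b * p - s)); lra.
Qed.

End SlopeBounds.

Lemma lt_div_of_mul_lt (a x d : R) : 0 < d -> a * d < x -> a < x / d.
Proof.
  intros hd h; apply (Rmult_lt_reg_r d); [exact hd|].
  unfold Rdiv; rewrite Rmult_assoc, Rinv_l, Rmult_1_r; lra.
Qed.

Theorem lemma4p4 (b p s : R) (hb : 1 < b) (hs : s < p * b) :
  let beta := mkcls b (-1) in
  let alpha := mkcls p (- s) in
  let c := (p ^ 2 - s ^ 2 - b ^ 2 + 1) / (2 * (p * b - s)) in
  c = (dot alpha alpha - dot beta beta) / (2 * dot alpha beta) /\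
  c < Rmin (p / b) (Rmin ((p - s) / (b - 1)) (b * p)) /\
  (big (csub alpha (cscale c beta)) /\
   (kahler (csub alpha (cscale c beta)) <-> s > c) /\
   (nef (csub alpha (cscale c beta)) <-> s >= c)) /\
  (dHYM_stable alpha beta <-> s > c) /\
  (dHYM_semistable alpha beta <-> s >= c).
Proof.
  intros beta alpha c.
  assert (hab : dot alpha beta = p * b - s) by (unfold dot; simpl; ring).
  assert (hcot : cot_dHYM alpha beta = c)
    by (unfold cot_dHYM, c; rewrite hab; unfold dot; simpl; field; lra).
  assert (hc : c * (2 * (p * b - s)) = p ^ 2 - s ^ 2 - b ^ 2 + 1)
    by (unfold c; field; lra).
  pose proof (slope_mul_b_lt b p s c hb hs hc) as hx.
  pose proof (slope_mul_pred_b_lt b p s c hb hs hc) as hxy.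
  pose proof (slope_lt_b_mul_p b p s c hb hs hc) as hbp.
  assert (hgam : csub alpha (cscale c beta) = mkcls (p - c * b) (- (s - c)))
    by (unfold csub, cadd, cscale; simpl; f_equal; ring).
  assert (hab0 : dot alpha beta <> 0) by lra.
  rewrite dHYM_stable_iff_kahler, dHYM_semistable_iff_nef, hcot, hgam by exact hab0.
  rewrite kahler_mkcls_iff, nef_mkcls_iff.
  split; [now rewrite <- hcot|].
  split; [|split; [split; [apply big_mkcls; lra | split; lra] | split; split; lra]].
  repeat apply Rmin_glb_lt; [| |exact hbp]; apply lt_div_of_mul_lt; lra.
Qed.
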